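(* Let $r=r(n)\ge3$ and $m=m(n)\ge1$ be integers with $m=o(r^{-3}n^{3/2})$, and let $e$ be a fixed $r$-subset of $[n]$. For $H\in\mathcal{L}_r(n,m-1)$ let $N_r(H)$ be the set of $r$-subsets of $[n]$, distinct from $e$, no two vertices of which lie in a common edge of $H$. Then, as $n\to\infty$, uniformly over such $H$, \[ |N_r(H)|=\Bigl[N-\binom r2m\binom{n-2}{r-2}\Bigr]\Bigl(1+O\Bigl(\frac{r^4}{n^2}+\frac{r^6m^2}{n^3}\Bigr)\Bigr). \]
   Context: $N=\binom nr$. An $r$-graph on $[n]$ is a set of $r$-subsets of $[n]$ (edges); it is linear if any two distinct edges share at most one vertex. $\mathcal{L}_r(n,m)$ is the set of linear $r$-graphs on $[n]$ with exactly $m$ edges. *)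

From HB Require Import structures.
From mathcomp Require Import all_boot all_order all_algebra.
Set Implicit Arguments. Unset Strict Implicit. Unset Printing Implicit Defensive.
Import Order.TTheory GRing.Theory Num.Theory.

Definition is_rgraph (n r : nat) (H : {set {set 'I_n}}) : bool :=
  [forall h in H, #|h| == r].

Definition linear_graph (n : nat) (H : {set {set 'I_n}}) : bool :=
  [forall h1 in H, forall h2 in H, (h1 != h2) ==> (#|h1 :&: h2| <= 1)].

Definition in_L (n r m : nat) (H : {set {set 'I_n}}) : bool :=
  [&& is_rgraph r H, linear_graph H & #|H| == m].

Definition Nr (n r : nat) (e : {set 'I_n}) (H : {set {set 'I_n}}) : {set {set 'I_n}} :=
  [set f : {set 'I_n} | [&& #|f| == r, f != e &
     [forall x in f, forall y in f,
        (x != y) ==> ~~ [exists h in H, (x \in h) && (y \in h)]]]].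

From HB Require Import structures.
From mathcomp Require Import all_boot all_order all_algebra.
From mathcomp Require Import zify ring lra.
Import Order.TTheory GRing.Theory Num.Theory.
Set Implicit Arguments. Unset Strict Implicit.

(* Call an r-set f bad if two of its vertices lie in a common edge of H, and
   let k(f) count the pairs {x, y}, inside an edge of H, with {x, y} in f; so
   f is bad iff k(f) > 0.  The first moment sum_f k(f) is exactly
   (m-1) C(r,2) C(n-2,r-2), and 2k <= [k > 0] + k^2 bounds the number of bad
   sets between 2 sum k - sum k^2 and sum k.  By linearity two distinct pairs
   in edges span 3 or 4 vertices, so sum k^2 - sum k counts r-sets through 3 or
   4 prescribed vertices, which is O(C(n,r) r^6 m^2 / n^3).  The remaining gap
   C(r,2) C(n-2,r-2) + 1 (one more edge in the formula, and the excluded set e)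
   is O(C(n,r) r^4 / n^2). *)

Section Supersets.
Variable T : finType.
Implicit Types (A U : {set T}) (k j : nat).

Definition supersets k U := [set A : {set T} | (#|A| == k) && (U \subset A)].

Lemma setDUK U A : U \subset A -> (A :\: U) :|: U = A.
Proof.
by move=> sUA; rewrite setDE setUIl [~: U :|: U]setUC setUCr setIT; apply/setUidPl.
Qed.

Lemma card_supersets k U : #|U| <= k ->
  #|supersets k U| = 'C(#|T| - #|U|, k - #|U|).
Proof.
move=> leUk; have -> : #|T| - #|U| = #|~: U| by rewrite [RHS]cardsCs setCK.
rewrite -cards_draws.
rewrite -(@card_in_imset _ _ (fun A => A :\: U)); last first.
  move=> A B; rewrite !inE => /andP[_ sUA] /andP[_ sUB] eqAB.
  by rewrite -(setDUK sUA) -(setDUK sUB) eqAB.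
apply: eq_card => B; rewrite inE; apply/imsetP/andP => [[A]|[sBCU /eqP cardB]].
  rewrite inE => /andP[/eqP <- sUA] ->; split; first exact: subsetDr.
  by rewrite cardsD (setIidPr sUA).
have disjBU : B :&: U = set0 by apply/disjoint_setI0; rewrite disjoints_subset.
exists (B :|: U).
  by rewrite inE subsetUr cardsU disjBU cards0 subn0 cardB subnK ?eqxx.
by rewrite setDUl setDv setU0; symmetry; apply/setDidPl; rewrite disjoints_subset.
Qed.

(* The factor [j <= k] matters: for k < j the binomial is 'C(_, 0) = 1. *)
Lemma card_supersets_le k U j : j <= #|U| ->
  #|supersets k U| <= (j <= k) * 'C(#|T| - j, k - j).
Proof.
move=> lejU; have [lejk|ltkj] := leqP j k; rewrite ?mul1n ?mul0n.
  have [V] : exists V, V \in [set V : {set T} | V \subset U & #|V| == j].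
    by apply/card_gt0P; rewrite cards_draws bin_gt0.
  rewrite inE => /andP[sVU /eqP cardV]; rewrite -cardV -card_supersets ?cardV //.
  apply/subset_leq_card/subsetP => A; rewrite !inE => /andP[-> /=].
  exact: subset_trans.
rewrite leqn0 cards_eq0; apply/eqP/setP => A; rewrite !inE.
apply/negbTE/andP => -[/eqP cardA /subset_leq_card].
by rewrite cardA; apply/negP; rewrite -ltnNge (leq_trans ltkj).
Qed.

End Supersets.

Lemma sum_nat_bool (I : finType) (P b : pred I) :
  \sum_(i | P i) (b i : nat) = #|[set i | P i && b i]|.
Proof.
by rewrite -sum1dep_card big_mkcondr; apply: eq_bigr => i _; case: (b i).
Qed.

(* Ordered pairs of distinct edge-pairs spanning 3 vertices (at most
   M C(r,2) * M 2r of them) or 4 vertices (at most (M C(r,2))^2). *)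
Definition overlap_bound n r M := M * 'C(r, 2) *
  (M * (2 * r) * 'C(n - 3, r - 3) + M * 'C(r, 2) * ((4 <= r) * 'C(n - 4, r - 4))).

Section PairCount.
Variable T : finType.
Implicit Types (h p f : {set T}) (H : {set {set T}}).

Definition pairs h := [set p : {set T} | p \subset h & #|p| == 2].

Definition pair_count H f := \sum_(h in H) \sum_(p in pairs h) (p \subset f : nat).

Lemma card_pairs h : #|pairs h| = 'C(#|h|, 2).
Proof. exact: cards_draws. Qed.

Lemma pair_count_eq0 H f : (pair_count H f == 0) =
  [forall x in f, forall y in f,
     (x != y) ==> ~~ [exists h in H, (x \in h) && (y \in h)]].
Proof.
rewrite sum_nat_eq0; apply/forall_inP/forall_inP => [no_pair x fx | free h Hh].
  apply/forall_inP => y fy; apply/implyP => neq_xy.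
  apply/exists_inP => -[h Hh /andP[hx hy]].
  move: (no_pair h Hh); rewrite sum_nat_eq0 => /forall_inP /(_ [set x; y]).
  rewrite inE cards2 neq_xy andbT !subUset !sub1set hx hy fx fy.
  by move=> /(_ isT).
rewrite sum_nat_eq0; apply/forall_inP => p; rewrite inE.
move=> /andP[sph /cards2P[x [y [neq_xy ep]]]]; move: sph; rewrite ep.
rewrite !subUset !sub1set eqb0 => /andP[hx hy]; apply/negP => /andP[fx fy].
move/forall_inP: (free x fx) => /(_ y fy); rewrite neq_xy /=.
by case/exists_inP; exists h; rewrite ?hx.
Qed.

Lemma pair_count_sq H f : pair_count H f * pair_count H f =
  \sum_(h in H) \sum_(p in pairs h) \sum_(h' in H) \sum_(p' in pairs h')
    ((p :|: p') \subset f : nat).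
Proof.
rewrite {1}/pair_count big_distrl; apply: eq_bigr => h _; rewrite big_distrl.
apply: eq_bigr => p _; rewrite big_distrr; apply: eq_bigr => h' _; rewrite big_distrr.
by apply: eq_bigr => p' _; rewrite subUset; case: (p \subset f); case: (p' \subset f).
Qed.

Lemma card_meeting_pairs p h : #|p| = 2 ->
  #|[set p' in pairs h | p :&: p' != set0]| <= 2 * #|h|.
Proof.
move=> cardp; rewrite -cardp -cardsX.
apply: leq_trans (leq_imset_card (fun xy => [set xy.1; xy.2]) _).
apply/subset_leq_card/subsetP => p'.
rewrite !inE => /andP[/andP[sp'h /cards2P[a [b [_ ep]]]] /set0Pn[x]].
move: sp'h; rewrite ep subUset !sub1set !inE => /andP[ha hb] /andP[px /orP[]/eqP ex].
  by apply/imsetP; exists (x, b); rewrite ?inE ?px ?hb // ex.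
by apply/imsetP; exists (x, a); rewrite ?inE ?px ?ha // ex setUC.
Qed.

Variables (H : {set {set T}}) (r : nat).
Hypothesis uniformH : {in H, forall h, #|h| = r}.
Local Notation n := #|T|.

Lemma sum_pair_count : 2 <= r ->
  \sum_(f : {set T} | #|f| == r) pair_count H f = #|H| * 'C(r, 2) * 'C(n - 2, r - 2).
Proof.
move=> le2r; rewrite exchange_big /=.
rewrite (eq_bigr (fun=> 'C(r, 2) * 'C(n - 2, r - 2))) => [|h Hh].
  by rewrite sum_nat_const mulnA.
rewrite exchange_big /= (eq_bigr (fun=> 'C(n - 2, r - 2))) => [|p].
  by rewrite sum_nat_const card_pairs uniformH.
rewrite inE => /andP[_ /eqP cardp].
by rewrite sum_nat_bool -cardp -card_supersets // cardp.
Qed.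

Hypothesis linearH : {in H &, forall h h', h != h' -> #|h :&: h'| <= 1}.

Lemma card_supersets_pairU h h' p p' : 3 <= r ->
  h \in H -> h' \in H -> p \in pairs h -> p' \in pairs h' ->
  #|supersets r (p :|: p')| <= ((h' == h) && (p' == p)) * 'C(n - 2, r - 2)
     + (p :&: p' != set0) * 'C(n - 3, r - 3) + (4 <= r) * 'C(n - 4, r - 4).
Proof.
move=> le3r Hh Hh'; rewrite !inE => /andP[sph /eqP cardp] /andP[sp'h' /eqP cardp'].
have [eqp|neqp] := eqVneq p' p.
  have [eqh|neqh] := eqVneq h' h.
    rewrite /= mul1n eqp setUid -addnA; apply: leq_trans (leq_addr _ _).
    by have := card_supersets_le r (leqnn #|p|); rewrite cardp (ltnW le3r) mul1n.
  have le1 : #|h :&: h'| <= 1 by apply: linearH; rewrite // eq_sym.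
  have : p \subset h :&: h' by rewrite subsetI sph -eqp sp'h'.
  by move/subset_leq_card; rewrite cardp => /leq_trans/(_ le1).
have le1I : #|p :&: p'| <= 1.
  rewrite leqNgt; apply: contra neqp => lt1I.
  have eqIp : p :&: p' = p by apply/eqP; rewrite eqEcard subsetIl cardp.
  have eqIp' : p :&: p' = p' by apply/eqP; rewrite eqEcard subsetIr cardp'.
  by rewrite -eqIp' eqIp.
have cardU : #|p :|: p'| = 4 - #|p :&: p'| by rewrite cardsU cardp cardp'.
rewrite andbF mul0n add0n.
have [disj|meet] := eqVneq (p :&: p') set0.
  apply: leq_trans (leq_addl _ _).
  by rewrite card_supersets_le // cardU disj cards0.
rewrite mul1n; apply: leq_trans (leq_addr _ _).
have := @card_supersets_le _ r (p :|: p') 3; rewrite le3r mul1n; apply.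
by rewrite cardU; move: le1I; case: #|_| => [|[]].
Qed.

Lemma sum_pair_count_sq : 3 <= r ->
  \sum_(f : {set T} | #|f| == r) pair_count H f * pair_count H f <=
  #|H| * 'C(r, 2) * 'C(n - 2, r - 2) + overlap_bound n r #|H|.
Proof.
move=> le3r; rewrite /overlap_bound -mulnDr addnA.
rewrite (eq_bigr _ (fun f _ => pair_count_sq H f)) exchange_big /=.
set c := (X in _ <= _ * X).
have -> : #|H| * 'C(r, 2) * c = \sum_(h in H) \sum_(p in pairs h) c.
  rewrite -mulnA -sum_nat_const; apply: eq_bigr => h Hh.
  by rewrite sum_nat_const card_pairs uniformH.
apply: leq_sum => h Hh; rewrite exchange_big /=.
apply: leq_sum => p hp; rewrite exchange_big /=.
have cardp : #|p| = 2 by move: hp; rewrite inE => /andP[_ /eqP].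
apply: (@leq_trans (\sum_(h' in H) \sum_(p' in pairs h')
   (((h' == h) && (p' == p)) * 'C(n - 2, r - 2)
     + (p :&: p' != set0) * 'C(n - 3, r - 3) + (4 <= r) * 'C(n - 4, r - 4)))).
  apply: leq_sum => h' Hh'; rewrite exchange_big /=; apply: leq_sum => p' hp'.
  by rewrite sum_nat_bool; exact: card_supersets_pairU.
under eq_bigr => h' _ do rewrite big_split /= big_split /=.
rewrite big_split /= big_split /=; apply: leq_add; first apply: leq_add.
- rewrite (bigD1 h) //= [X in _ + X <= _]big1 ?addn0 => [|h' /andP[_ neqh]].
    rewrite (bigD1 p) //= [X in _ + X <= _]big1 ?addn0 => [|p' /andP[_ neqp]].
      by rewrite !eqxx mul1n.
    by rewrite (negbTE neqp) andbF.
  by apply: big1 => p' _; rewrite (negbTE neqh).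
- rewrite -mulnA -sum_nat_const; apply: leq_sum => h' Hh'.
  rewrite -big_distrl /= leq_mul2r sum_nat_bool -(uniformH Hh').
  by rewrite card_meeting_pairs ?orbT.
- rewrite (eq_bigr (fun=> 'C(r, 2) * ((4 <= r) * 'C(n - 4, r - 4)))) => [|h' Hh'].
    by rewrite sum_nat_const mulnA.
  by rewrite sum_nat_const card_pairs uniformH.
Qed.

End PairCount.

Lemma leq_double_pos_sq k : 2 * k <= (0 < k) + k * k.
Proof. by case: k => [|[|k]] //; nia. Qed.

Lemma card_Nr_bounds n r M (e : {set 'I_n}) (H : {set {set 'I_n}}) :
  in_L r M H -> 3 <= r ->
  'C(n, r) <= #|Nr r e H| + M * 'C(r, 2) * 'C(n - 2, r - 2) + 1 /\
  #|Nr r e H| + M * 'C(r, 2) * 'C(n - 2, r - 2) <= 'C(n, r) + overlap_bound n r M.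
Proof.
case/and3P=> rgH linH /eqP cardH le3r.
have uniformH : {in H, forall h : {set 'I_n}, #|h| = r}.
  by move=> h Hh; apply/eqP; move/forall_inP: rgH; apply.
have linearH : {in H &, forall h h' : {set 'I_n}, h != h' -> #|h :&: h'| <= 1}.
  move=> h h' Hh Hh' neqh.
  by move/forall_inP: linH => /(_ h Hh)/forall_inP/(_ h' Hh'); rewrite neqh.
set K := M * _ * _; set D := overlap_bound n r M.
set S := [set f : {set 'I_n} | #|f| == r].
set B := [set f : {set 'I_n} | 0 < pair_count H f].
have cardS : #|S :&: B| + #|S :\: B| = 'C(n, r) by rewrite cardsID card_draws card_ord.
have NrE : Nr r e H = (S :\: B) :\ e.
  apply/setP => f; rewrite !inE -pair_count_eq0 -eqn0Ngt.
  by case: (#|f| == r); case: (f != e); case: (pair_count H f == 0).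
have leNr : #|Nr r e H| <= #|S :\: B| by rewrite NrE subset_leq_card // subsetDl.
have geNr : #|S :\: B| <= #|Nr r e H| + 1.
  by rewrite NrE (cardsD1 e (S :\: B)) addnC leq_add2l; case: (e \in _).
have cardSB : #|S :&: B| = \sum_(f : {set 'I_n} | #|f| == r) (0 < pair_count H f).
  by rewrite sum_nat_bool; apply: eq_card => f; rewrite !inE.
have sumK : \sum_(f : {set 'I_n} | #|f| == r) pair_count H f = K.
  by rewrite sum_pair_count ?card_ord ?cardH // ltnW.
have leSBK : #|S :&: B| <= K.
  by rewrite cardSB -sumK; apply: leq_sum => f _; case: (pair_count H f).
have le2K : 2 * K <= #|S :&: B| + (K + D).
  have := sum_pair_count_sq uniformH linearH le3r; rewrite card_ord cardH -/K -/D.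
  move/(leq_add (leqnn #|S :&: B|)); apply: leq_trans.
  rewrite cardSB -big_split -sumK big_distrr.
  by apply: leq_sum => f _; apply: leq_double_pos_sq.
by split; lia.
Qed.

Lemma bin_ffact_sub n r k :
  'C(n, r) * r ^_ k = n ^_ k * ((k <= r) * 'C(n - k, r - k)).
Proof.
elim: k n r => [|k IHk] n [|r]; rewrite ?ffactn0 ?muln1 ?mul1n ?subn0 //.
  by rewrite ffact0n ltn0 /= !muln0.
rewrite ffactSS mulnA [_ * r.+1]mulnC -mul_bin_diag -mulnA IHk ffactnS -mulnA ltnS subSS.
by rewrite -subn1 -subnDA add1n.
Qed.

Lemma bin2_mul2 r : 'C(r, 2) * 2 = r ^_ 2.
Proof. by rewrite -bin_ffact. Qed.

Lemma leq_exp_ffact n k : 2 * k.-1 <= n -> n ^ k <= 2 ^ k.-1 * n ^_ k.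
Proof.
elim: k => [|[|k] IHk] le_n; rewrite ?ffactn1 ?mul1n //.
have -> : 2 ^ k.+2.-1 * n ^_ k.+2 = 2 ^ k.+1.-1 * n ^_ k.+1 * (2 * (n - k.+1)).
  by rewrite ffactnSr /= expnS; ring.
rewrite expnSr; apply: leq_mul; [apply: IHk|]; lia.
Qed.

Lemma leq_ffact_exp n k : n ^_ k <= n ^ k.
Proof.
elim: k => [|k IHk] //; rewrite ffactnSr expnSr.
by apply: leq_mul; rewrite ?leq_subr.
Qed.

Section Asymptotics.
Variables n r m : nat.
Hypotheses (le3r : 3 <= r) (le1m : 1 <= m) (le6n : 6 <= n).
Hypothesis small_m : 4 * (m ^ 2 * r ^ 6) <= n ^ 3.
Local Notation N := 'C(n, r).
Local Notation c := ('C(r, 2) * 'C(n - 2, r - 2)).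

Lemma r2_le_n : r ^ 2 <= n.
Proof.
rewrite leqNgt; apply/negP => lt_n_r2.
have : n ^ 3 < r ^ 6 by rewrite (_ : 6 = 2 * 3) // expnM ltn_exp2r.
rewrite ltnNge => /negP; apply; apply: leq_trans small_m.
by rewrite mulnA leq_pmull // muln_gt0 expn_gt0 le1m.
Qed.

Lemma m_r4_le_n2 : 2 * m * r ^ 4 <= n ^ 2.
Proof.
rewrite -(@leq_exp2r _ _ 2) //.
have -> : (2 * m * r ^ 4) ^ 2 = 4 * (m ^ 2 * r ^ 6) * r ^ 2 by ring.
have -> : (n ^ 2) ^ 2 = n ^ 3 * n by ring.
exact: leq_mul small_m r2_le_n.
Qed.

Lemma c_mul_ffact2 : c * (2 * n ^_ 2) = N * (r ^_ 2 * r ^_ 2).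
Proof.
have := bin_ffact_sub n r 2; rewrite (ltnW le3r) mul1n => e2.
have -> : N * (r ^_ 2 * r ^_ 2) = 'C(r, 2) * 2 * (N * r ^_ 2) by rewrite bin2_mul2; ring.
by rewrite e2; ring.
Qed.

Lemma c_gt0 : 0 < c.
Proof.
rewrite muln_gt0 !bin_gt0 (leq_trans _ le3r) //=.
by have := r2_le_n; nia.
Qed.

Lemma double_mc_le_N : 2 * m * c <= N.
Proof.
have pos : 0 < 2 * n ^_ 2 by rewrite muln_gt0 ffact_gt0 (leq_trans _ le6n).
rewrite -(leq_pmul2r pos) -mulnA c_mul_ffact2.
apply: (@leq_trans (N * (2 * m * r ^ 4))).
  rewrite mulnCA leq_mul2l (_ : 4 = 2 + 2) // expnD.
  by apply/orP; right; rewrite leq_mul2l leq_mul ?leq_ffact_exp ?orbT.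
rewrite leq_mul2l; apply/orP; right; apply: leq_trans m_r4_le_n2 _.
by have := @leq_exp_ffact n 2; rewrite expn1; apply; apply: leq_trans le6n.
Qed.

Lemma c_n2_le_N_r4 : c * n ^ 2 <= N * r ^ 4.
Proof.
apply: (@leq_trans (c * (2 * n ^_ 2))).
  by rewrite leq_mul2l (@leq_exp_ffact n 2) ?orbT // (leq_trans _ le6n).
rewrite c_mul_ffact2 leq_mul2l (_ : 4 = 2 + 2) // expnD.
by rewrite leq_mul ?leq_ffact_exp ?orbT.
Qed.

Local Notation M := m.-1.

Lemma overlap3_le :
  M * 'C(r, 2) * (M * (2 * r) * 'C(n - 3, r - 3)) * n ^ 3 <= 4 * N * (m ^ 2 * r ^ 6).
Proof.
have := bin_ffact_sub n r 3; rewrite le3r mul1n => e3.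
apply: (@leq_trans (M * 'C(r, 2) * (M * (2 * r) * 'C(n - 3, r - 3)) * (4 * n ^_ 3))).
  by rewrite leq_mul2l (@leq_exp_ffact n 3) ?orbT // (leq_trans _ le6n).
have -> : M * 'C(r, 2) * (M * (2 * r) * 'C(n - 3, r - 3)) * (4 * n ^_ 3)
  = 4 * (M * M) * ('C(r, 2) * 2) * r * (n ^_ 3 * 'C(n - 3, r - 3)) by ring.
have -> : 4 * N * (m ^ 2 * r ^ 6) = 4 * (m * m) * r ^ 2 * r * (N * r ^ 3) by ring.
rewrite bin2_mul2 -e3.
have leMM : M * M <= m * m := leq_mul (leq_pred m) (leq_pred m).
exact: leq_mul (leq_mul (leq_mul (leq_mul (leqnn 4) leMM) (leq_ffact_exp r 2)) (leqnn r))
               (leq_mul (leqnn N) (leq_ffact_exp r 3)).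
Qed.

Lemma overlap4_le : M * 'C(r, 2) * (M * 'C(r, 2) * ((4 <= r) * 'C(n - 4, r - 4))) * n ^ 3
   <= 2 * N * (m ^ 2 * r ^ 6).
Proof.
have := bin_ffact_sub n r 4 => e4.
have n_gt0 : 0 < n by apply: leq_trans le6n.
rewrite -(leq_pmul2r n_gt0) -mulnA -expnSr.
apply: (@leq_trans (M * 'C(r, 2) * (M * 'C(r, 2) * ((4 <= r) * 'C(n - 4, r - 4)))
                      * (8 * n ^_ 4))).
  by rewrite leq_mul2l (@leq_exp_ffact n 4) ?orbT.
have -> : M * 'C(r, 2) * (M * 'C(r, 2) * ((4 <= r) * 'C(n - 4, r - 4))) * (8 * n ^_ 4)
  = 2 * (M * M) * ('C(r, 2) * 2) * ('C(r, 2) * 2)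
      * (n ^_ 4 * ((4 <= r) * 'C(n - 4, r - 4))) by ring.
rewrite bin2_mul2 -e4.
apply: (@leq_trans (2 * (m * m) * r ^ 2 * r ^ 2 * (N * r ^ 4))).
  have leMM : M * M <= m * m := leq_mul (leq_pred m) (leq_pred m).
  exact: leq_mul (leq_mul (leq_mul (leq_mul (leqnn 2) leMM) (leq_ffact_exp r 2))
                          (leq_ffact_exp r 2)) (leq_mul (leqnn N) (leq_ffact_exp r 4)).
have -> : 2 * (m * m) * r ^ 2 * r ^ 2 * (N * r ^ 4)
  = 2 * N * (m ^ 2 * r ^ 6) * r ^ 2 by ring.
by rewrite leq_mul2l r2_le_n orbT.
Qed.

Lemma overlap_bound_le : overlap_bound n r M * n ^ 3 <= 6 * N * (m ^ 2 * r ^ 6).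
Proof.
rewrite /overlap_bound mulnDr mulnDl.
have -> : 6 * N * (m ^ 2 * r ^ 6)
  = 4 * N * (m ^ 2 * r ^ 6) + 2 * N * (m ^ 2 * r ^ 6) by ring.
exact: leq_add overlap3_le overlap4_le.
Qed.

End Asymptotics.

Local Open Scope ring_scope.

Lemma rel_error_le (R : realFieldType) (X N c D M u v : R) :
  N <= X + M * c + 1 -> X + M * c <= N + D -> 2 * ((M + 1) * c) <= N ->
  1 <= c -> 0 <= M -> c <= N * u -> D <= 6 * N * v -> 0 <= u -> 0 <= v ->
  `|X - (N - (M + 1) * c)| <= 12 * `|N - (M + 1) * c| * (u + v).
Proof.
move=> geN leN le2Mc ge1c ge0M le_c le_D ge0u ge0v.
set A := N - (M + 1) * c.
have ge0Mc : 0 <= (M + 1) * c by rewrite mulr_ge0 // ?addr_ge0 //; lra.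
have leNA : N <= 2 * A by rewrite /A; lra.
have ge0A : 0 <= A by lra.
have ge0XA : 0 <= X - A by rewrite /A; lra.
rewrite !ger0_norm //.
have leNu : N * u <= 2 * A * u by rewrite ler_wpM2r.
have leNv : N * v <= 2 * A * v by rewrite ler_wpM2r.
have ge0Au : 0 <= A * u by rewrite mulr_ge0.
have : X - A <= D + c by rewrite /A; lra.
lra.
Qed.

Lemma card_Nr_rel_error n r m (e : {set 'I_n}) (H : {set {set 'I_n}}) :
  (3 <= r)%N -> (1 <= m)%N -> (6 <= n)%N -> (4 * (m ^ 2 * r ^ 6) <= n ^ 3)%N ->
  in_L r m.-1 H ->
  let A : rat := ('C(n, r))%:R - ('C(r, 2))%:R * m%:R * ('C(n - 2, r - 2))%:R in
  `|(#|Nr r e H|)%:R - A|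
    <= 12 * `|A| * (r%:R ^+ 4 / n%:R ^+ 2 + r%:R ^+ 6 * m%:R ^+ 2 / n%:R ^+ 3).
Proof.
move=> le3r le1m le6n small_m HL; cbv zeta.
have [geN leN] := card_Nr_bounds e HL le3r.
have n_gt0 : (0 : rat) < n%:R by rewrite ltr0n (leq_trans _ le6n).
have mE : m%:R = m.-1%:R + 1 :> rat by rewrite natr1 prednK.
have -> : ('C(r, 2))%:R * m%:R * ('C(n - 2, r - 2))%:R
          = (m.-1%:R + 1) * ('C(r, 2) * 'C(n - 2, r - 2))%:R :> rat.
  by rewrite -mE natrM; ring.
apply: (rel_error_le (D := (overlap_bound n r m.-1)%:R)).
- by move: geN; rewrite -mulnA -(ler_nat rat) !natrD natrM.
- by move: leN; rewrite -mulnA -(ler_nat rat) !natrD natrM.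
- have : (2 * m * ('C(r, 2) * 'C(n - 2, r - 2)) <= 'C(n, r))%N by apply: double_mc_le_N.
  rewrite -(ler_nat rat) -mulnA natrM [(m * _)%:R]natrM -mE => h; lra.
- by rewrite ler1n; apply: (c_gt0 (m := m)).
- by [].
- rewrite mulrA ler_pdivlMr ?exprn_gt0 // -!natrX -!natrM ler_nat.
  by apply: c_n2_le_N_r4.
- rewrite [_ * m%:R ^+ 2]mulrC mulrA mulrA ler_pdivlMr ?exprn_gt0 //.
  rewrite -!natrX -!natrM ler_nat -mulnA.
  by apply: overlap_bound_le.
- by rewrite divr_ge0 // exprn_ge0.
- by rewrite divr_ge0 // ?mulr_ge0 // exprn_ge0.
Qed.

Theorem lemma10p1 (r m : nat -> nat) (e : forall n : nat, {set 'I_n})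
  (hr : forall n, (3 <= r n)%N)
  (hm : forall n, (1 <= m n)%N)
  (he : exists n1 : nat, forall n, (n1 <= n)%N -> #|e n| = r n)
  (ho : forall eps : rat, 0 < eps -> exists n0 : nat, forall n, (n0 <= n)%N ->
          ((m n)%:R ^+ 2 * (r n)%:R ^+ 6 : rat) <= eps * (n%:R ^+ 3)) :
  exists C : rat, exists n0 : nat, forall n, (n0 <= n)%N ->
    forall H : {set {set 'I_n}}, in_L (r n) (m n).-1 H ->
      let A : rat := ('C(n, r n))%:R
                     - ('C(r n, 2))%:R * (m n)%:R * ('C(n - 2, r n - 2))%:R in
      `| (#|Nr (r n) (e n) H|)%:R - A |
        <= C * `|A| * ((r n)%:R ^+ 4 / n%:R ^+ 2
                       + (r n)%:R ^+ 6 * (m n)%:R ^+ 2 / n%:R ^+ 3).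
Proof.
have [n0 small] := ho (1 / 4) isT.
exists 12, (maxn n0 6) => n; rewrite geq_max => /andP[le_n0 le6n] H HL.
apply: card_Nr_rel_error => //.
by rewrite -(ler_nat rat) natrM natrM !natrX; have := small n le_n0; lra.
Qed.
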